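(* For every positive integer $n$, the open $\frac{\pi}{2}$-thickening $B_{\frac{\pi}{2}}(\mathbb{S}^n,\mathbf{E}(\mathbb{S}^n))=\{f\in\mathbf{E}(\mathbb{S}^n):\exists x\in\mathbb{S}^n,\ \|f-d_{\mathbb{S}^n}(x,\cdot)\|_\infty<\frac{\pi}{2}\}$ is contractible.
   Context: $\mathbb{S}^n$ is the unit $n$-sphere with its geodesic metric $d_{\mathbb{S}^n}$. For a metric space $X$, $\Delta(X)=\{f:X\to\mathbb{R}\text{ bounded}:f(x)+f(x')\ge d_X(x,x')\}$ and the tight span $\mathbf{E}(X)$ is the set of pointwise-minimal elements of $\Delta(X)$ with the sup-norm metric; $\mathbb{S}^n$ is regarded as a subspace via $x\mapsto d_{\mathbb{S}^n}(x,\cdot)$. *)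

From HB Require Import structures.
From mathcomp Require Import all_boot all_order all_algebra.
From mathcomp Require Import all_classical all_reals all_analysis.
Unset Printing Implicit Defensive.
Import Order.TTheory GRing.Theory Num.Theory.
Local Open Scope ring_scope.
Local Open Scope classical_set_scope.

Definition dotr {R : realType} {m : nat} (x y : 'rV[R]_m) : R :=
  \sum_(i < m) x ord0 i * y ord0 i.

Definition sphere (R : realType) (n : nat) : Type :=
  {x : 'rV[R]_(n.+1) | dotr x x = 1}.

Definition dS {R : realType} {n : nat} (x y : sphere R n) : R :=
  acos (dotr (sval x) (sval y)).

Definition kur {R : realType} {n : nat} (x : sphere R n) : sphere R n -> R :=
  fun y => dS x y.

Definition boundedf {R : realType} {T : Type} (f : T -> R) : Prop :=
  exists M : R, forall x, `|f x| <= M.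

Definition supdist {R : realType} {T : Type} (f g : T -> R) : R :=
  sup (range (fun x => `|f x - g x|)).

Definition Delta {R : realType} {T : Type} (d : T -> T -> R) : set (T -> R) :=
  [set f | boundedf f /\ forall x x', d x x' <= f x + f x'].

Definition tight_span {R : realType} {T : Type} (d : T -> T -> R) : set (T -> R) :=
  [set f | Delta d f /\
     forall g, Delta d g -> (forall x, g x <= f x) -> g = f].

Definition thickening (R : realType) (n : nat) : set (sphere R n -> R) :=
  [set f | tight_span (@dS R n) f /\
     exists x : sphere R n, supdist f (kur x) < pi / 2].

(* A subset A of a metric space (T, d) is contractible: the identity of A is
   homotopic (through maps A -> A, continuously in the product topology of
   [0,1] x A) to a constant map. *)
Definition contractible {R : realType} {T : Type} (d : T -> T -> R) (A : set T) : Prop :=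
  exists2 a0, A a0 &
  exists H : R -> T -> T,
    [/\ forall t a, 0 <= t <= 1 -> A a -> A (H t a),
        forall a, A a -> H 0 a = a,
        forall a, A a -> H 1 a = a0 &
        forall t a, 0 <= t <= 1 -> A a ->
          forall e : R, 0 < e -> exists2 del : R, 0 < del &
            forall s b, 0 <= s <= 1 -> A b -> `|s - t| < del -> d a b < del ->
              d (H t a) (H s b) < e].

From HB Require Import structures.
From mathcomp Require Import all_boot all_order all_algebra.
From mathcomp Require Import all_classical all_reals all_analysis.
From mathcomp Require Import ring lra.
Import Order.TTheory GRing.Theory Num.Theory.
Local Open Scope ring_scope.
Local Open Scope classical_set_scope.

(* The tight span E(S^n) consists of the 1-Lipschitz [f] with [f y + f (-y) = pi], and
   [||f - d(x, .)|| = f x] for such [f]; so the thickening is the set of those [f] that are not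
   identically [pi/2].  Let [cube] act on the sphere as [z |-> z^3/|z|^2] in the first coordinate
   plane: it is odd and 8-Lipschitz, so [T f := pi/2 + (f o cube - pi/2)/8] lies in E(S^n) again.
   The straight-line homotopies from [f] to [T f] and from [T f] to [d(p, .)] stay in the
   thickening: on the first segment a function identically [pi/2] would make [f - pi/2] an
   eigenfunction of the pullback by [cube] with a nonpositive eigenvalue, and such a Lipschitz
   function vanishes since [cube] triples angles around a fixed point; on the second segment it
   is excluded by two distinct points [p], [q] with [cube p = cube q]. *)

Section DotProduct.
Context {R : realType} {k : nat}.
Implicit Types (a : R) (x y z : 'rV[R]_k).

Lemma dotrC x y : dotr x y = dotr y x.
Proof. by apply: eq_bigr => i _; rewrite mulrC. Qed.

Lemma dotrDl x y z : dotr (x + y) z = dotr x z + dotr y z.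
Proof. by rewrite /dotr -big_split; apply: eq_bigr => i _; rewrite !mxE mulrDl. Qed.

Lemma dotrZl a x y : dotr (a *: x) y = a * dotr x y.
Proof. by rewrite /dotr mulr_sumr; apply: eq_bigr => i _; rewrite !mxE mulrA. Qed.

Lemma dotrNl x y : dotr (- x) y = - dotr x y.
Proof. by rewrite -scaleN1r dotrZl mulN1r. Qed.

Lemma dotrBl x y z : dotr (x - y) z = dotr x z - dotr y z.
Proof. by rewrite dotrDl dotrNl. Qed.

Lemma dotrDr x y z : dotr x (y + z) = dotr x y + dotr x z.
Proof. by rewrite dotrC dotrDl !(dotrC x). Qed.

Lemma dotrZr a x y : dotr x (a *: y) = a * dotr x y.
Proof. by rewrite dotrC dotrZl dotrC. Qed.

Lemma dotrNr x y : dotr x (- y) = - dotr x y.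
Proof. by rewrite dotrC dotrNl dotrC. Qed.

Lemma dotrBr x y z : dotr x (y - z) = dotr x y - dotr x z.
Proof. by rewrite dotrDr dotrNr. Qed.

Lemma dotr0 x : dotr x 0 = 0.
Proof. by rewrite /dotr big1 // => i _; rewrite mxE mulr0. Qed.

Lemma dotr_ge0 x : 0 <= dotr x x.
Proof. by apply: sumr_ge0 => i _; rewrite -expr2 sqr_ge0. Qed.

Lemma dotr_eq0 x : dotr x x = 0 -> x = 0.
Proof.
move=> /eqP; rewrite psumr_eq0 => [/allP x0|i _]; last by rewrite -expr2 sqr_ge0.
apply/matrixP => i j; rewrite (ord1 i) mxE.
by have /(_ (mem_index_enum j)) := x0 j; rewrite -expr2 sqrf_eq0 => /eqP.
Qed.

Lemma dotr_CauchySchwarz x y : dotr x y ^+ 2 <= dotr x x * dotr y y.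
Proof.
have [/dotr_eq0 ->|yy_neq0] := eqVneq (dotr y y) 0.
  by rewrite !dotr0 expr0n mulr0.
have yy_gt0 : 0 < dotr y y by rewrite lt_def yy_neq0 dotr_ge0.
have := dotr_ge0 (dotr y y *: x - dotr x y *: y).
rewrite !dotrBl !dotrBr !dotrZl !dotrZr (dotrC y x).
have -> : dotr y y * (dotr y y * dotr x x) - dotr y y * (dotr x y * dotr x y)
  - (dotr x y * (dotr y y * dotr x y) - dotr x y * (dotr x y * dotr y y))
  = dotr y y * (dotr x x * dotr y y - dotr x y ^+ 2) by ring.
by rewrite pmulr_rge0 // subr_ge0.
Qed.

Lemma dotr_unit_bound x y : dotr x x = 1 -> dotr y y = 1 -> -1 <= dotr x y <= 1.
Proof.
move=> xx1 yy1; have := dotr_ge0 (x - y); have := dotr_ge0 (x + y).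
rewrite !dotrBl !dotrBr !dotrDl !dotrDr xx1 yy1 (dotrC y x).
by move=> ? ?; apply/andP; split; lra.
Qed.

Lemma dotr_sub_proj x y z : dotr y y = 1 ->
  dotr (x - dotr x y *: y) (z - dotr z y *: y) = dotr x z - dotr x y * dotr z y.
Proof.
by move=> yy1; rewrite !dotrBl !dotrBr !dotrZl !dotrZr yy1 (dotrC y z); ring.
Qed.

End DotProduct.

Lemma acos_le (R : realType) (x a : R) :
  -1 <= x <= 1 -> 0 <= a <= pi -> cos a <= x -> acos x <= a.
Proof.
move=> x_bd a_bd cos_le; rewrite leNgt; apply/negP => a_lt.
have [/andP[acos_ge0 acos_lepi] cos_acos] := acos_def x_bd.
have : cos (acos x) < cos a by rewrite ltr_cos // in_itv /= ?acos_ge0 ?acos_lepi.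
by rewrite cos_acos ltNge cos_le.
Qed.

Section Sphere.
Context {R : realType} {n : nat}.
Implicit Types y z w : sphere R n.

Lemma sphere_val_inj : injective (@sval _ _ : sphere R n -> 'rV[R]_n.+1).
Proof. by move=> y z; apply: eq_sig_hprop => x; exact: Prop_irrelevance. Qed.

Fact antipode_subproof y : dotr (- sval y) (- sval y) = 1.
Proof. by rewrite dotrNl dotrNr opprK (svalP y). Qed.

Definition antipode y : sphere R n := exist _ (- sval y) (antipode_subproof y).

Lemma antipodeK : involutive antipode.
Proof. by move=> y; apply: sphere_val_inj; rewrite /= opprK. Qed.

Lemma sphere_dot_bound y z : -1 <= dotr (sval y) (sval z) <= 1.
Proof. exact: dotr_unit_bound (svalP y) (svalP z). Qed.

Lemma dS_ge0 y z : 0 <= dS y z.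
Proof. exact: acos_ge0 (sphere_dot_bound y z). Qed.

Lemma dS_le_pi y z : dS y z <= pi.
Proof. exact: acos_lepi (sphere_dot_bound y z). Qed.

Lemma dSC y z : dS y z = dS z y.
Proof. by rewrite /dS dotrC. Qed.

Lemma dSxx y : dS y y = 0.
Proof. by rewrite /dS (svalP y) acos1. Qed.

Lemma dS_antipoder y z : dS y (antipode z) = pi - dS y z.
Proof. by rewrite /dS dotrNr acosN // sphere_dot_bound. Qed.

Lemma dS_antipodel y z : dS (antipode y) z = pi - dS y z.
Proof. by rewrite dSC dS_antipoder dSC. Qed.

Lemma dS_antipode y : dS y (antipode y) = pi.
Proof. by rewrite dS_antipoder dSxx subr0. Qed.

Lemma dS_triangle y w z : dS y z <= dS y w + dS w z.
Proof.
have [/(le_trans (dS_le_pi y z))//|sum_lt_pi] := lerP pi (dS y w + dS w z).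
apply: acos_le; first exact: sphere_dot_bound.
  by rewrite addr_ge0 ?dS_ge0 // ltW.
rewrite cosD /dS !sin_acos ?sphere_dot_bound // !acosK ?in_itv /= ?sphere_dot_bound //.
rewrite (dotrC (sval w) (sval z)).
set u := dotr (sval y) (sval w); set v := dotr (sval z) (sval w).
have CS := dotr_CauchySchwarz (sval y - u *: sval w) (sval z - v *: sval w).
rewrite !dotr_sub_proj ?(svalP y) ?(svalP z) ?(svalP w) // in CS.
have sqr_le1 (c : R) : -1 <= c <= 1 -> 0 <= 1 - c ^+ 2.
  by case/andP=> ? ?; nra.
have : `|dotr (sval y) (sval z) - u * v| <= Num.sqrt (1 - u ^+ 2) * Num.sqrt (1 - v ^+ 2).
  by rewrite -sqrtrM ?sqr_le1 ?sphere_dot_bound // -sqrtr_sqr ler_wsqrtr //.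
by rewrite ler_norml => /andP[? _]; lra.
Qed.

End Sphere.

Section TightSpan.
Context {R : realType} {T : Type} {d : T -> T -> R}.
Hypotheses (dxx : forall x, d x x = 0) (dC : forall x y, d x y = d y x)
  (d_triangle : forall x y z, d x z <= d x y + d y z).
Implicit Types f : T -> R.

Lemma tight_span_ge0 {f} x : tight_span d f -> 0 <= f x.
Proof. by case=> [[_ /(_ x x)]] + _; rewrite dxx; lra. Qed.

(* Lowering [f] at the single point [y] to [v] stays in Delta(X), so minimality forces [v = f y]. *)
Lemma tight_span_minimal_at {f} y v : tight_span d f -> 0 <= v <= f y ->
  (forall z, z <> y -> d y z <= v + f z) -> v = f y.
Proof.
move=> [[[M f_bd] f_Delta] f_min] /andP[v_ge0 v_le] v_Delta.
pose g z := if pselect (z = y) then v else f z.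
have gy : g y = v by rewrite /g; case: pselect.
have gz z : z <> y -> g z = f z by rewrite /g; case: pselect.
have g_le_f z : g z <= f z by have [->|/gz->] := pselect (z = y); rewrite ?gy.
suff <- : g = f by [].
apply: f_min => //; split.
  exists M => z; have [->|/gz->//] := pselect (z = y).
  by rewrite gy ger0_norm // (le_trans v_le) // (le_trans (ler_norm _)).
move=> x x'; have [->|xy] := pselect (x = y); have [->|x'y] := pselect (x' = y).
- by rewrite gy dxx; lra.
- by rewrite gy gz //; exact: v_Delta.
- by rewrite gy gz // dC addrC; exact: v_Delta.
- by rewrite !gz //; exact: f_Delta.
Qed.

Lemma tight_span_lip {f} y z : tight_span d f -> f y - f z <= d y z.
Proof.
move=> f_tight; rewrite leNgt; apply/negP => lt_f.
have f_Delta := f_tight.1.2.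
suff : f z + d y z = f y by lra.
have d_ge0 : 0 <= d y z by have := d_triangle y z y; rewrite dxx (dC z y); lra.
apply: tight_span_minimal_at => //.
  by have := tight_span_ge0 z f_tight => ?; apply/andP; split; lra.
by move=> w _; have := d_triangle y z w; have := f_Delta z w; lra.
Qed.

End TightSpan.

Section SphereTightSpan.
Context {R : realType} {n : nat}.
Implicit Types (x y z : sphere R n) (f : sphere R n -> R).

Definition antipodal_lip1 f :=
  (forall y z, f y - f z <= dS y z) /\ (forall y, f y + f (antipode y) = pi).

Lemma antipodal_lip1_range {f} y : antipodal_lip1 f -> 0 <= f y <= pi.
Proof.
case=> lip anti; have := lip y (antipode y); have := lip (antipode y) y.
rewrite dS_antipode dS_antipodel dSxx subr0 => ? ?.
by have := anti y => ?; apply/andP; split; lra.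
Qed.

Lemma antipodal_lip1_bounded {f} : antipodal_lip1 f -> boundedf f.
Proof.
by move=> f_lip; exists pi => y; have /andP[? ?] := antipodal_lip1_range y f_lip; rewrite ger0_norm.
Qed.

Lemma antipodal_lip1_Delta {f} : antipodal_lip1 f -> Delta dS f.
Proof.
move=> f_lip; split; first exact: antipodal_lip1_bounded.
move=> y z; have := f_lip.1 (antipode z) y; rewrite dS_antipodel.
by have := f_lip.2 z; rewrite (dSC y z); lra.
Qed.

Lemma antipodal_lip1_kur x : antipodal_lip1 (kur x).
Proof.
split => [y z|y]; rewrite /kur; last by rewrite dS_antipoder; lra.
by have := dS_triangle x z y; rewrite (dSC z y); lra.
Qed.

Lemma tight_span_antipodal f y : tight_span dS f -> f y + f (antipode y) = pi.
Proof.
move=> f_tight; have [[_ f_Delta] _] := f_tight.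
have f_ge0 z := tight_span_ge0 dSxx z f_tight.
have f_max z : f z = Num.max 0 (pi - f (antipode z)).
  symmetry; apply: (tight_span_minimal_at dSxx dSC _ _ f_tight) => //.
    rewrite le_max lexx ge_max f_ge0 /=.
    by have := f_Delta z (antipode z); rewrite dS_antipode; lra.
  move=> w _; have := tight_span_lip dSxx dSC (@dS_triangle R n) (antipode z) w f_tight.
  rewrite dS_antipodel => lip.
  have : pi - f (antipode z) <= Num.max 0 (pi - f (antipode z)) by rewrite le_max lexx orbT.
  lra.
have [fy_le|fy_gt] := lerP (f (antipode y)) pi.
  by rewrite f_max max_r ?subr_ge0 //; lra.
have fy0 : f y = 0 by rewrite f_max max_l //; lra.
by have := f_max (antipode y); rewrite antipodeK fy0 subr0 max_r ?pi_ge0 //; lra.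
Qed.

Lemma tight_spanP f : tight_span dS f <-> antipodal_lip1 f.
Proof.
split => [f_tight|f_lip].
  split => [y z|y]; last exact: tight_span_antipodal.
  exact: (tight_span_lip dSxx dSC (@dS_triangle R n) _ _ f_tight).
split => [|g [_ g_Delta] g_le_f]; first exact: antipodal_lip1_Delta.
apply/funext => y; apply/eqP; rewrite eq_le g_le_f /=.
have := g_Delta y (antipode y); rewrite dS_antipode.
by have := g_le_f (antipode y); have := f_lip.2 y; lra.
Qed.

End SphereTightSpan.

Section SupDist.
Context {R : realType} {T : Type}.
Implicit Types f g : T -> R.

Lemma supdist_le f g M : inhabited T -> (forall y, `|f y - g y| <= M) -> supdist f g <= M.
Proof.
case=> y0 le_M; apply: ge_sup; first by exists `|f y0 - g y0|, y0.
by move=> _ [y _ <-]; exact: le_M.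
Qed.

Lemma le_supdist {f g} y : boundedf f -> boundedf g -> `|f y - g y| <= supdist f g.
Proof.
move=> [Mf f_bd] [Mg g_bd]; apply: ub_le_sup; last by exists y.
exists (Mf + Mg) => _ [z _ <-].
by apply: le_trans (ler_normB _ _) _; apply: lerD.
Qed.

End SupDist.

Section Thickening.
Context {R : realType} {n : nat}.
Implicit Types (x : sphere R n) (f : sphere R n -> R).

Lemma supdist_kur f x : antipodal_lip1 f -> supdist f (kur x) = f x.
Proof.
move=> f_lip; apply/eqP; rewrite eq_le; apply/andP; split.
  apply: supdist_le; first exact: inhabits x.
  move=> y; rewrite /kur ler_norml; have := f_lip.1 y x.
  by have := (antipodal_lip1_Delta f_lip).2 x y; rewrite (dSC y x); lra.
have := le_supdist x (antipodal_lip1_bounded f_lip) (antipodal_lip1_bounded (antipodal_lip1_kur x)).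
by rewrite /kur dSxx subr0 ger0_norm //; case/andP: (antipodal_lip1_range x f_lip).
Qed.

Lemma thickeningP f : thickening R n f <-> antipodal_lip1 f /\ exists x, f x < pi / 2.
Proof.
split => [[/tight_spanP f_lip [x]]|[f_lip [x fx_lt]]].
  by rewrite supdist_kur // => ?; split => //; exists x.
by split; [exact/tight_spanP|exists x; rewrite supdist_kur].
Qed.

End Thickening.

Section RealFacts.
Context {R : realType}.
Implicit Types a b c q t u v x : R.

Lemma norm_le_geometric_eq0 q M v : 0 <= q < 1 -> (forall j, `|v| <= M * q ^+ j) -> v = 0.
Proof.
move=> /andP[q_ge0 q_lt1] le_geo; apply/normr0_eq0/eqP; rewrite eq_le normr_ge0 andbT.
have geo_cvg : geometric M q @ \oo --> 0 by apply: cvg_geometric; rewrite ger0_norm.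
rewrite leNgt; apply/negP => v_gt0.
have [j _ /(_ j (leqnn j))] := cvgr_dist_lt _ _ geo_cvg _ v_gt0.
by rewrite sub0r normrN ltNge (le_trans (le_geo j) (ler_norm _)).
Qed.

Lemma one_sub_cos_mulr2n x c : c <= cos x -> (1 - cos x) * (2 + 2 * c) <= 1 - cos (x *+ 2).
Proof. by rewrite cos_mulr2n => ?; have := cos_le1 x; nra. Qed.

(* For [8 acos v < pi], each doubling of the angle [acos v] multiplies [1 - cos] by at least
   3, 3 and 2. *)
Lemma acos_le_8acos u v : -1 <= u <= 1 -> -1 <= v <= 1 ->
  1 - u <= 9 * (1 - v) -> acos u <= 8 * acos v.
Proof.
move=> u_bd v_bd le_u.
have [/andP[a_ge0 _] cos_a] := acos_def v_bd; set a := acos v in a_ge0 cos_a *.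
have [/(le_trans (acos_lepi u_bd))//|a_lt] := lerP pi (8 * a).
apply: acos_le => //; first by apply/andP; split; lra.
have pi_gt0 := pi_gt0 R.
have cos_gt0 (x : R) : 0 <= x -> x * 2 < pi -> 0 < cos x.
  by move=> ? ?; apply: cos_gt0_pihalf; apply/andP; split; lra.
have -> : 8 * a = ((a *+ 2) *+ 2) *+ 2 by rewrite -!mulrnA mulr_natl.
have c4_gt0 : 0 < cos ((a *+ 2) *+ 2) by apply: cos_gt0; rewrite !mulr2n; lra.
have c2_gt0 : 0 < cos (a *+ 2) by apply: cos_gt0; rewrite !mulr2n; lra.
have c1_gt0 : 0 < cos a by apply: cos_gt0; lra.
have half_le (x : R) : 0 < cos x -> 0 < cos (x *+ 2) -> 1 / 2 <= cos x.
  by rewrite cos_mulr2n => ? ?; nra.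
have := one_sub_cos_mulr2n _ _ (half_le _ c1_gt0 c2_gt0).
have := one_sub_cos_mulr2n _ _ (half_le _ c2_gt0 c4_gt0).
have := one_sub_cos_mulr2n _ _ (ltW c4_gt0).
by rewrite cos_a; case/andP: v_bd => *; lra.
Qed.

Lemma cos_mul3 t : cos (3 * t) = cos t ^+ 3 - 3 * cos t * sin t ^+ 2.
Proof. by rewrite (_ : 3 * t = t + (t + t)) ?cosD ?sinD; ring. Qed.

Lemma sin_mul3 t : sin (3 * t) = 3 * cos t ^+ 2 * sin t - sin t ^+ 3.
Proof. by rewrite (_ : 3 * t = t + (t + t)) ?sinD ?cosD; ring. Qed.

Lemma polar_coord a b : exists2 t, -pi <= t <= pi &
  a = Num.sqrt (a ^+ 2 + b ^+ 2) * cos t /\ b = Num.sqrt (a ^+ 2 + b ^+ 2) * sin t.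
Proof.
set r := Num.sqrt _; have pi_gt0 := pi_gt0 R.
have r_ge0 : 0 <= r := sqrtr_ge0 _.
have r2 : r ^+ 2 = a ^+ 2 + b ^+ 2 by rewrite sqr_sqrtr // addr_ge0 ?sqr_ge0.
have [r0|r_neq0] := eqVneq r 0.
  exists 0; first by apply/andP; split; lra.
  by rewrite r0 !mul0r; move: r2; rewrite r0 expr0n /=; split; nra.
have r_gt0 : 0 < r by rewrite lt_def r_neq0.
have ar_bd : -1 <= a / r <= 1.
  rewrite -ler_norml normf_div (ger0_norm r_ge0) ler_pdivrMr // mul1r.
  by rewrite -sqrtr_sqr ler_wsqrtr // lerDl sqr_ge0.
have [/andP[t_ge0 t_lepi] cos_t] := acos_def ar_bd; set t := acos _ in t_ge0 t_lepi cos_t.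
have rcos : r * cos t = a by rewrite cos_t mulrC divfK.
have rsin : r * sin t = `|b|.
  rewrite -sqrtr_sqr -[LHS]ger0_norm ?mulr_ge0 ?sin_ge0_pi ?t_ge0 //.
  rewrite -sqrtr_sqr exprMn sin2cos2 cos_t expr_div_n mulrBr mulr1 r2 mulrC divfK //.
    by congr Num.sqrt; ring.
  by rewrite -r2 expf_neq0.
have [b_ge0|b_lt0] := lerP 0 b.
  by exists t; [apply/andP; split; lra | rewrite rcos rsin ger0_norm].
exists (- t); first by apply/andP; split; lra.
by rewrite cosN sinN mulrN rcos rsin ltr0_norm // opprK.
Qed.

End RealFacts.

Section PlaneCoordinates.
Context {R : realType} {m : nat}.
Local Notation V := 'rV[R]_m.+2.
Implicit Types (a b c d : R) (x y : V).

Let i0 : 'I_m.+2 := ord0.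
Let i1 : 'I_m.+2 := lift ord0 ord0.

Let i1_neq0 : (i1 == i0) = false.
Proof. by rewrite eq_sym (negbTE (neq_lift _ _)). Qed.

Let tail_neq0 j : (lift ord0 (lift ord0 j) == i0) = false.
Proof. by rewrite eq_sym (negbTE (neq_lift _ _)). Qed.

Let tail_neq1 j : (lift ord0 (lift ord0 j) == i1) = false.
Proof. by rewrite (inj_eq lift_inj) eq_sym (negbTE (neq_lift _ _)). Qed.

Definition zre x : R := x ord0 i0.
Definition zim x : R := x ord0 i1.
Definition ztail x : 'rV[R]_m := \row_j x ord0 (lift ord0 (lift ord0 j)).

Definition set_plane x a b : V :=
  \row_i (if i == i0 then a else if i == i1 then b else x ord0 i).

Lemma zre_set_plane x a b : zre (set_plane x a b) = a.
Proof. by rewrite /zre mxE eqxx. Qed.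

Lemma zim_set_plane x a b : zim (set_plane x a b) = b.
Proof. by rewrite /zim mxE i1_neq0 eqxx. Qed.

Lemma ztail_set_plane x a b : ztail (set_plane x a b) = ztail x.
Proof.
by apply/matrixP => i j; rewrite !mxE tail_neq0 tail_neq1.
Qed.

Lemma set_plane_set_plane x a b c d : set_plane (set_plane x a b) c d = set_plane x c d.
Proof. by apply/matrixP => i j; rewrite !mxE; case: eqP => // _; case: eqP. Qed.

Lemma zreN x : zre (- x) = - zre x. Proof. by rewrite /zre mxE. Qed.

Lemma zimN x : zim (- x) = - zim x. Proof. by rewrite /zim mxE. Qed.

Lemma set_planeN x a b : set_plane (- x) (- a) (- b) = - set_plane x a b.
Proof. by apply/matrixP => i j; rewrite !mxE; case: eqP => // _; case: eqP. Qed.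

Lemma set_plane_id x : set_plane x (zre x) (zim x) = x.
Proof.
apply/matrixP => i j; rewrite (ord1 i) mxE.
by case: eqP => [->|_]; last case: eqP => [->|_].
Qed.

Lemma dotr_plane x y : dotr x y = zre x * zre y + zim x * zim y + dotr (ztail x) (ztail y).
Proof.
rewrite /dotr big_ord_recl big_ord_recl addrA; congr (_ + _ + _).
by apply: eq_bigr => j _; rewrite !mxE.
Qed.

Lemma dotr_set_plane x a b : dotr (set_plane x a b) (set_plane x a b) =
  a ^+ 2 + b ^+ 2 + dotr (ztail x) (ztail x).
Proof. by rewrite dotr_plane zre_set_plane zim_set_plane ztail_set_plane -!expr2. Qed.

End PlaneCoordinates.

Section CubeMap.
Context {R : realType}.
Implicit Types a b c d r s t : R.

(* [cube_re a b + i cube_im a b = z^3 / |z|^2] for [z = a + ib] (and [0] for [z = 0]) *)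
Definition cube_re a b := (a ^+ 3 - 3 * a * b ^+ 2) / (a ^+ 2 + b ^+ 2).
Definition cube_im a b := (3 * a ^+ 2 * b - b ^+ 3) / (a ^+ 2 + b ^+ 2).

Lemma cube_reN a b : cube_re (- a) (- b) = - cube_re a b.
Proof. by rewrite /cube_re !sqrrN -[RHS]mulNr; congr (_ * _); ring. Qed.

Lemma cube_imN a b : cube_im (- a) (- b) = - cube_im a b.
Proof. by rewrite /cube_im !sqrrN -[RHS]mulNr; congr (_ * _); ring. Qed.

Lemma cube_re_r0 a : cube_re a 0 = a.
Proof.
rewrite /cube_re expr0n /= !mulr0 !subr0 addr0.
by have [->|a_neq0] := eqVneq a 0; [rewrite expr0n mul0r | field].
Qed.

(* [Re (z^3 conj(w)^3) / |z w|^2 = Re (z conj(w))^3 / |z conj(w)|^2] *)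
Lemma cube_dot a b c d : cube_re a b * cube_re c d + cube_im a b * cube_im c d =
  cube_re (a * c + b * d) (a * d - b * c).
Proof.
rewrite /cube_re /cube_im !mulf_div -mulrDl.
have -> : (a * c + b * d) ^+ 2 + (a * d - b * c) ^+ 2 =
  (a ^+ 2 + b ^+ 2) * (c ^+ 2 + d ^+ 2) by ring.
by congr (_ / _); ring.
Qed.

Lemma cube_norm a b : cube_re a b ^+ 2 + cube_im a b ^+ 2 = a ^+ 2 + b ^+ 2.
Proof. by rewrite !expr2 cube_dot (_ : a * b - b * a = 0) 1?mulrC ?subrr // cube_re_r0. Qed.

Lemma cube_re_polar r t : cube_re (r * cos t) (r * sin t) = r * cos (3 * t).
Proof.
have [->|r_neq0] := eqVneq r 0; first by rewrite !mul0r cube_re_r0.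
by rewrite /cube_re cos_mul3 !exprMn -mulrDr cos2Dsin2 mulr1; field.
Qed.

Lemma cube_im_polar r t : cube_im (r * cos t) (r * sin t) = r * sin (3 * t).
Proof.
have [->|r_neq0] := eqVneq r 0; first by rewrite !mul0r /cube_im !expr0n /= !(mulr0, subr0, mul0r).
by rewrite /cube_im sin_mul3 !exprMn -mulrDr cos2Dsin2 mulr1; field.
Qed.

(* Writing [a = rho cos th] with [rho = |a + ib|], [cube_re a b = rho cos (3 th)], and
   [1 - cos (3 th) <= 9 (1 - cos th)]. *)
Lemma cube_re_bound a b s : Num.sqrt (a ^+ 2 + b ^+ 2) <= s -> s - cube_re a b <= 9 * (s - a).
Proof.
set rho := Num.sqrt _ => rho_le.
have rho_ge0 : 0 <= rho := sqrtr_ge0 _.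
have rho2 : rho ^+ 2 = a ^+ 2 + b ^+ 2 by rewrite sqr_sqrtr // addr_ge0 ?sqr_ge0.
have [rho0|rho_neq0] := eqVneq rho 0.
  have [-> ->] : a = 0 /\ b = 0 by move: rho2; rewrite rho0 expr0n /=; split; nra.
  by rewrite cube_re_r0; lra.
have rho_gt0 : 0 < rho by rewrite lt_def rho_neq0.
have a_bd : -rho <= a <= rho by apply/andP; split; nra.
have cube_reE : cube_re a b * rho ^+ 2 = 4 * a ^+ 3 - 3 * a * rho ^+ 2.
  by rewrite /cube_re -rho2 divfK ?expf_neq0 // rho2; ring.
suff : 0 <= 9 * (s - a) * rho ^+ 2 - s * rho ^+ 2 + cube_re a b * rho ^+ 2.
  rewrite (_ : _ + _ = (9 * (s - a) - (s - cube_re a b)) * rho ^+ 2); last by ring.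
  by rewrite pmulr_lge0 ?exprn_gt0 // subr_ge0.
rewrite cube_reE (_ : _ + _ = 8 * (s - rho) * rho ^+ 2 + 4 * (rho - a) ^+ 2 * (2 * rho + a)).
  by case/andP: a_bd => ? ?; rewrite addr_ge0 ?mulr_ge0 ?sqr_ge0 //; lra.
by ring.
Qed.

End CubeMap.

Section CubeMapVectors.
Context {R : realType} {m : nat}.
Implicit Types (t : R) (x y : 'rV[R]_m.+2).

Definition cubev x := set_plane x (cube_re (zre x) (zim x)) (cube_im (zre x) (zim x)).

Definition zabs x : R := Num.sqrt (zre x ^+ 2 + zim x ^+ 2).

Definition polarv x t := set_plane x (zabs x * cos t) (zabs x * sin t).

Lemma dotr_cubev x : dotr (cubev x) (cubev x) = dotr x x.
Proof. by rewrite dotr_set_plane cube_norm dotr_plane -!expr2. Qed.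

Lemma cubevN x : cubev (- x) = - cubev x.
Proof. by rewrite /cubev zreN zimN cube_reN cube_imN set_planeN. Qed.

Lemma zabs2 x : zabs x ^+ 2 = zre x ^+ 2 + zim x ^+ 2.
Proof. by rewrite sqr_sqrtr // addr_ge0 ?sqr_ge0. Qed.

Lemma dotr_polarv x t : dotr (polarv x t) (polarv x t) = dotr x x.
Proof.
by rewrite dotr_set_plane !exprMn -mulrDr cos2Dsin2 mulr1 zabs2 dotr_plane -!expr2.
Qed.

Lemma cubev_polarv x t : cubev (polarv x t) = polarv x (3 * t).
Proof.
rewrite {1}/cubev {1 2}/polarv zre_set_plane zim_set_plane.
by rewrite cube_re_polar cube_im_polar set_plane_set_plane.
Qed.

Lemma polarv_surj x : exists2 t, -pi <= t <= pi & polarv x t = x.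
Proof.
have [t t_bd [re_eq im_eq]] := polar_coord (zre x) (zim x).
by exists t => //; rewrite /polarv /zabs -re_eq -im_eq set_plane_id.
Qed.

Lemma dotr_polarv0 x t : dotr (polarv x t) (polarv x 0) =
  zabs x ^+ 2 * cos t + dotr (ztail x) (ztail x).
Proof.
by rewrite dotr_plane !zre_set_plane !zim_set_plane !ztail_set_plane cos0 sin0; ring.
Qed.

Lemma plane_tail_bound x y : dotr x x = 1 -> dotr y y = 1 ->
  Num.sqrt ((zre x * zre y + zim x * zim y) ^+ 2 + (zre x * zim y - zim x * zre y) ^+ 2)
  <= 1 - dotr (ztail x) (ztail y).
Proof.
move=> x1 y1.
have -> : (zre x * zre y + zim x * zim y) ^+ 2 + (zre x * zim y - zim x * zre y) ^+ 2
  = zabs x ^+ 2 * zabs y ^+ 2 by rewrite !zabs2; ring.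
rewrite -exprMn sqrtr_sqr ger0_norm ?mulr_ge0 ?sqrtr_ge0 //.
have tail_sq z : dotr z z = 1 -> dotr (ztail z) (ztail z) = 1 - zabs z ^+ 2.
  by move=> z1; rewrite zabs2 -z1 dotr_plane; ring.
have CS := dotr_CauchySchwarz (ztail x) (ztail y).
rewrite !tail_sq // in CS.
have := dotr_ge0 (ztail x); have := dotr_ge0 (ztail y); rewrite !tail_sq //.
have := sqrtr_ge0 (zre x ^+ 2 + zim x ^+ 2); have := sqrtr_ge0 (zre y ^+ 2 + zim y ^+ 2).
rewrite -/(zabs x) -/(zabs y); set a := zabs x; set b := zabs y => b_ge0 a_ge0 b_le a_le.
have ab_le1 : a * b <= 1 by nra.
have : (1 - a ^+ 2) * (1 - b ^+ 2) <= (1 - a * b) ^+ 2 by have := sqr_ge0 (a - b); nra.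
rewrite -/a -/b in CS; set r := dotr _ _ in CS * => ?; nra.
Qed.

Lemma cubev_dot_bound x y : dotr x x = 1 -> dotr y y = 1 ->
  1 - dotr (cubev x) (cubev y) <= 9 * (1 - dotr x y).
Proof.
move=> x1 y1; have := cube_re_bound _ _ _ (plane_tail_bound _ _ x1 y1).
rewrite !dotr_plane /cubev !zre_set_plane !zim_set_plane !ztail_set_plane cube_dot.
lra.
Qed.

End CubeMapVectors.

Section SphereMaps.
Context {R : realType} {m : nat}.
Local Notation S := (sphere R m.+1).
Implicit Types (t : R) (y z : S).

Definition cube y : S := exist _ (cubev (sval y)) (etrans (dotr_cubev _) (svalP y)).

Definition polar y t : S := exist _ (polarv (sval y) t) (etrans (dotr_polarv _ _) (svalP y)).

Lemma dS_cube_le y z : dS (cube y) (cube z) <= 8 * dS y z.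
Proof.
apply: acos_le_8acos; rewrite ?sphere_dot_bound //.
exact: cubev_dot_bound (svalP y) (svalP z).
Qed.

Lemma cube_antipode y : cube (antipode y) = antipode (cube y).
Proof. by apply: sphere_val_inj; rewrite /= cubevN. Qed.

Lemma cube_polar y t : cube (polar y t) = polar y (3 * t).
Proof. by apply: sphere_val_inj; rewrite /= cubev_polarv. Qed.

Lemma polar_surj y : exists2 t, -pi <= t <= pi & polar y t = y.
Proof.
have [t t_bd polar_t] := polarv_surj (sval y).
by exists t => //; apply: sphere_val_inj.
Qed.

Lemma dS_polar0 y t : -pi <= t <= pi -> dS (polar y t) (polar y 0) <= `|t|.
Proof.
move=> t_bd; apply: acos_le; first exact: sphere_dot_bound.
  by rewrite normr_ge0 /=; case: (ler0P t) => ?; rewrite ?ler0_norm ?gtr0_norm //; lra.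
have cos_abs : cos `|t| = cos t by case: (ler0P t) => ?; rewrite ?ler0_norm ?gtr0_norm ?cosN.
rewrite cos_abs /= dotr_polarv0.
have := svalP y; rewrite dotr_plane -!expr2 -zabs2 => y1.
have := dotr_ge0 (ztail (sval y)); have := cos_le1 t; have := sqr_ge0 (zabs (sval y)).
by nra.
Qed.

End SphereMaps.

Section CubeEigenfunction.
Context {R : realType} {m : nat}.
Local Notation S := (sphere R m.+1).
Implicit Types (h : S -> R) (k : R).

Lemma lip1_norm {h} : (forall y z, h y - h z <= dS y z) ->
  forall y z, `|h y - h z| <= dS y z.
Proof.
by move=> h_lip y z; rewrite ler_norml; have := h_lip y z; have := h_lip z y; rewrite dSC; lra.
Qed.

(* With [polar y t = y]: [h y = (-k)^j * h (polar y (t / 3^j))], and [h] vanishes at the fixed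
   point [polar y 0] of [cube], whose distance to [polar y (t / 3^j)] is at most [pi / 3^j]. *)
Lemma cube_eigen_eq0_le1 h k y : (forall y z, h y - h z <= dS y z) ->
  0 <= k <= 1 -> (forall y, h (cube y) = - k * h y) -> h y = 0.
Proof.
move=> h_lip /andP[k_ge0 k_le1] h_cube; have [t t_bd polar_t] := polar_surj y.
have h_fixed : h (polar y 0) = 0.
  have := h_cube (polar y 0); rewrite cube_polar mulr0 => h_eq.
  have k1_gt0 : 0 < 1 + k by lra.
  by apply: (mulfI (lt0r_neq0 k1_gt0)); rewrite mulr0 mulrDl mul1r {1}h_eq; ring.
have h_iter j : h y = (- k) ^+ j * h (polar y (t / 3 ^+ j)).
  elim: j => [|j ->]; first by rewrite expr0 divr1 polar_t mul1r.
  have -> : t / 3 ^+ j = 3 * (t / 3 ^+ j.+1) by rewrite exprS; field.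
  by rewrite -cube_polar h_cube (exprSr (- k)); ring.
have pi_gt0 := pi_gt0 R.
apply: (@norm_le_geometric_eq0 R (k / 3) pi); first by apply/andP; split; lra.
move=> j; have pow3_gt0 : 0 < 3 ^+ j :> R by rewrite exprn_gt0.
have pow3_ge1 : 1 <= 3 ^+ j :> R by rewrite exprn_ege1 // ler1n.
have tj_bd : -pi <= t / 3 ^+ j <= pi.
  by apply/andP; rewrite ler_pdivlMr ?ler_pdivrMr //; nra.
have := lip1_norm h_lip (polar y (t / 3 ^+ j)) (polar y 0); rewrite h_fixed subr0 => h_le.
have tj_le : `|t / 3 ^+ j| <= pi / 3 ^+ j.
  rewrite normrM normfV (gtr0_norm pow3_gt0) ler_pdivrMr // divfK ?gt_eqF //.
  by rewrite ler_norml.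
rewrite (h_iter j) normrM normrX normrN (ger0_norm k_ge0) expr_div_n mulrCA.
by rewrite ler_wpM2l ?exprn_ge0 // (le_trans h_le) // (le_trans (dS_polar0 _ _ tj_bd)).
Qed.

Lemma cube_eigen_eq0_gt1 h k y : (forall y z, h y - h z <= dS y z) ->
  1 < k -> (forall y, h (cube y) = - k * h y) -> h y = 0.
Proof.
move=> h_lip k_gt1 h_cube; have k_gt0 : 0 < k := lt_trans ltr01 k_gt1.
have h_iter j : h (iter j cube y) = (- k) ^+ j * h y.
  by elim: j => [|j IH]; rewrite ?expr0 ?mul1r // iterS h_cube IH exprS mulrA.
apply: (@norm_le_geometric_eq0 R k^-1 (`|h y| + pi)).
  by rewrite invr_ge0 ltW //= invf_lt1.
move=> j; have := lip1_norm h_lip (iter j cube y) y; rewrite h_iter => h_le.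
have := ler_normD ((- k) ^+ j * h y - h y) (h y); rewrite subrK.
rewrite normrM normrX normrN (gtr0_norm k_gt0) exprVn ler_pdivlMr ?exprn_gt0 //.
by have := dS_le_pi (iter j cube y) y; lra.
Qed.

Lemma cube_eigen_eq0 h k y : (forall y z, h y - h z <= dS y z) ->
  0 <= k -> (forall y, h (cube y) = - k * h y) -> h y = 0.
Proof.
move=> h_lip k_ge0 h_cube; have [k_le1|k_gt1] := lerP k 1.
  by apply: cube_eigen_eq0_le1 => //; rewrite k_ge0.
exact: cube_eigen_eq0_gt1 h_lip k_gt1 h_cube.
Qed.

End CubeEigenfunction.

Section BasePoints.
Context {R : realType} {m : nat}.
Local Notation S := (sphere R m.+1).

Definition north_vec : 'rV[R]_m.+2 := \row_i (i == ord0)%:R.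

Fact north_subproof : dotr north_vec north_vec = 1.
Proof.
rewrite /dotr big_ord_recl big1 ?addr0 => [|i _]; first by rewrite !mxE mulr1.
by rewrite !mxE mul0r.
Qed.

Definition north : S := exist _ north_vec north_subproof.

Definition base : S := polar north 0.
Definition base' : S := polar north (pi *+ 2 / 3).

Lemma cube_base' : cube base' = cube base.
Proof.
rewrite !cube_polar mulr0 (_ : 3 * (pi *+ 2 / 3) = pi *+ 2); last by field.
by apply: sphere_val_inj; rewrite /= /polarv cos2pi sin2pi cos0 sin0.
Qed.

Lemma dS_base_base'_neq0 : dS base base' != 0.
Proof.
have pi_gt0 := pi_gt0 R.
have zabs1 : zabs north_vec = 1.
  by rewrite /zabs /zre /zim !mxE /= expr1n expr0n addr0 sqrtr1.
have tail0 : dotr (ztail north_vec) (ztail north_vec) = 0.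
  by have := north_subproof; rewrite dotr_plane -!expr2 -zabs2 zabs1; lra.
rewrite dSC /dS /= dotr_polarv0 zabs1 tail0 expr1n mul1r addr0 cosK ?in_itv /=.
  by rewrite gt_eqF // divr_gt0 // mulrn_wgt0.
by apply/andP; split; rewrite -mulr_natr; lra.
Qed.

End BasePoints.

Section Contraction.
Context {R : realType} {m : nat}.
Local Notation S := (sphere R m.+1).
Implicit Types (a b c s t : R) (y z : S) (f g : S -> R).

Lemma antipodal_lip1_comb3 a b c f g k : 0 <= a -> 0 <= b -> 0 <= c -> a + b + c = 1 ->
  antipodal_lip1 f -> antipodal_lip1 g -> antipodal_lip1 k ->
  antipodal_lip1 (fun y => a * f y + b * g y + c * k y).
Proof.
move=> a_ge0 b_ge0 c_ge0 abc1 [f_lip f_anti] [g_lip g_anti] [k_lip k_anti]; split => [y z|y].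
  have := ler_wpM2l a_ge0 (f_lip y z); have := ler_wpM2l b_ge0 (g_lip y z).
  have := ler_wpM2l c_ge0 (k_lip y z); rewrite !mulrBr => ? ? ?.
  have -> : dS y z = a * dS y z + b * dS y z + c * dS y z by rewrite -!mulrDl abc1 mul1r.
  lra.
transitivity (a * (f y + f (antipode y)) + b * (g y + g (antipode y))
  + c * (k y + k (antipode y))); first by ring.
by rewrite f_anti g_anti k_anti -!mulrDl abc1 mul1r.
Qed.

Definition shrink_cube f y := pi / 2 + (f (cube y) - pi / 2) / 8.

Lemma antipodal_lip1_shrink_cube {f} : antipodal_lip1 f -> antipodal_lip1 (shrink_cube f).
Proof.
case=> f_lip f_anti; split => [y z|y]; rewrite /shrink_cube.
  by have := f_lip (cube y) (cube z); have := dS_cube_le y z; lra.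
by rewrite cube_antipode; have := f_anti (cube y); lra.
Qed.

(* The two straight-line segments [f ~> shrink_cube f ~> kur base], written as a single convex
   combination whose weights are 2-Lipschitz in [t]. *)
Definition weight_f t : R := if t <= 1 / 2 then 1 - 2 * t else 0.
Definition weight_base t : R := if t <= 1 / 2 then 0 else 2 * t - 1.

Definition homotopy t f y := weight_f t * f y
  + (1 - weight_f t - weight_base t) * shrink_cube f y + weight_base t * kur base y.

Lemma weights_ge0 t : 0 <= t <= 1 ->
  [/\ 0 <= weight_f t, 0 <= weight_base t & 0 <= 1 - weight_f t - weight_base t].
Proof. by case/andP=> *; rewrite /weight_f /weight_base; case: ifP => ?; split; lra. Qed.

Lemma weights_lip t s : `|weight_f t - weight_f s| <= 2 * `|t - s| /\
  `|weight_base t - weight_base s| <= 2 * `|t - s|.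
Proof.
have := ler_norm (t - s); have := ler_norm (s - t); rewrite distrC => ? ?.
rewrite /weight_f /weight_base !ler_norml.
by case: (lerP t (1 / 2)) => ?; case: (lerP s (1 / 2)) => ?; split; apply/andP; split; lra.
Qed.

Lemma homotopy0 f : homotopy 0 f = f.
Proof.
have half_ge0 : (0 : R) <= 1 / 2 by lra.
by apply/funext => y; rewrite /homotopy /weight_f /weight_base half_ge0 /=; ring.
Qed.

Lemma homotopy1 f : homotopy 1 f = kur base.
Proof.
have half_lt1 : (1 <= 1 / 2 :> R) = false by apply/negbTE; rewrite -ltNge; lra.
by apply/funext => y; rewrite /homotopy /weight_f /weight_base half_lt1 /=; ring.
Qed.

Lemma antipodal_lip1_homotopy t f : 0 <= t <= 1 -> antipodal_lip1 f ->
  antipodal_lip1 (homotopy t f).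
Proof.
move=> t_bd f_lip; have [wf_ge0 wb_ge0 w_ge0] := weights_ge0 _ t_bd.
apply: antipodal_lip1_comb3 => //; first by ring.
  exact: antipodal_lip1_shrink_cube.
exact: antipodal_lip1_kur.
Qed.

Lemma antipodal_lip1_exists_lt_pihalf g : antipodal_lip1 g ->
  (exists y, g y != pi / 2) -> exists y, g y < pi / 2.
Proof.
move=> [_ g_anti] [y gy_neq]; have [gy_lt|gy_gt] := ltrP (g y) (pi / 2); first by exists y.
exists (antipode y); have := g_anti y.
by rewrite le_eqVlt eq_sym (negbTE gy_neq) /= in gy_gt; lra.
Qed.

Lemma homotopy_exists_lt_pihalf t f : 0 <= t <= 1 -> antipodal_lip1 f ->
  (exists y, f y < pi / 2) -> exists y, homotopy t f y < pi / 2.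
Proof.
move=> t_bd f_lip [y0 fy0_lt].
apply: antipodal_lip1_exists_lt_pihalf; first exact: antipodal_lip1_homotopy.
have [//|/forallNP hom_neq] := pselect (exists y, homotopy t f y != pi / 2).
have hom_eq y : homotopy t f y = pi / 2 by have /negP/negPn/eqP := hom_neq y.
move: hom_eq; rewrite /homotopy /shrink_cube /weight_f /weight_base.
case/andP: t_bd => t_ge0 t_le1; case: (lerP t (1 / 2)) => [t_le|t_gt] hom_eq.
  have [t0|t_neq0] := eqVneq t 0.
    by have := hom_eq y0; rewrite t0; lra.
  have t_gt0 : 0 < t by rewrite lt_def t_neq0.
  suff : f y0 - pi / 2 = 0 by lra.
  apply: (cube_eigen_eq0 (fun y => f y - pi / 2) (4 * (1 - 2 * t) / t)).
  - by move=> y z; have := f_lip.1 y z; lra.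
  - by rewrite divr_ge0 //; lra.
  - move=> y; apply: (mulIf (lt0r_neq0 t_gt0)); rewrite mulrAC mulNr divfK ?lt0r_neq0 //.
    by have := hom_eq y; lra.
have := hom_eq base; have := hom_eq base'; rewrite cube_base' /kur dSxx => ? ?.
have : (2 * t - 1) * dS (@base R m) base' == 0 by apply/eqP; lra.
by rewrite mulf_eq0 (negbTE dS_base_base'_neq0) orbF => /eqP; lra.
Qed.

Lemma homotopy_dist_le t s {f g} y : antipodal_lip1 f -> antipodal_lip1 g -> 0 <= s <= 1 ->
  `|homotopy t f y - homotopy s g y| <= 4 * pi * `|t - s| + supdist f g.
Proof.
move=> f_lip g_lip s_bd.
have [wf_ge0 wb_ge0 w_ge0] := weights_ge0 _ s_bd; have [wf_lip wb_lip] := weights_lip t s.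
have fg_le z : `|f z - g z| <= supdist f g.
  exact: le_supdist (antipodal_lip1_bounded f_lip) (antipodal_lip1_bounded g_lip).
have /andP[? ?] := antipodal_lip1_range y f_lip.
have /andP[? ?] := antipodal_lip1_range y (antipodal_lip1_shrink_cube f_lip).
have /andP[? ?] := antipodal_lip1_range y (antipodal_lip1_kur (@base R m)).
have -> : homotopy t f y - homotopy s g y =
    (weight_f t - weight_f s) * (f y - shrink_cube f y)
  + (weight_base t - weight_base s) * (kur base y - shrink_cube f y)
  + (weight_f s * (f y - g y)
  + (1 - weight_f s - weight_base s) * ((f (cube y) - g (cube y)) / 8)).
  by rewrite /homotopy /shrink_cube; ring.
have term_le a b : `|a| <= 2 * `|t - s| -> -pi <= b <= pi ->
    `|a * b| <= 2 * `|t - s| * pi.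
  by move=> ? ?; rewrite normrM ler_pM // ler_norml.
have n1 : `|(weight_f t - weight_f s) * (f y - shrink_cube f y)| <= 2 * `|t - s| * pi.
  by apply: term_le => //; apply/andP; split; lra.
have n2 : `|(weight_base t - weight_base s) * (kur base y - shrink_cube f y)|
    <= 2 * `|t - s| * pi.
  by apply: term_le => //; apply/andP; split; lra.
have n3 : `|weight_f s * (f y - g y)| <= weight_f s * supdist f g.
  by rewrite normrM ger0_norm // ler_wpM2l.
have n4 : `|(1 - weight_f s - weight_base s) * ((f (cube y) - g (cube y)) / 8)|
    <= (1 - weight_f s - weight_base s) * supdist f g.
  rewrite normrM (ger0_norm w_ge0) ler_wpM2l // ler_norml.
  by have := fg_le (cube y); rewrite ler_norml => /andP[? ?]; apply/andP; split; lra.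
have supdist_ge0 : 0 <= supdist f g := le_trans (normr_ge0 _) (fg_le y).
have normD4 (u v w x : R) : `|u + v + (w + x)| <= `|u| + `|v| + `|w| + `|x|.
  by have := ler_normD (u + v) (w + x); have := ler_normD u v; have := ler_normD w x; lra.
by apply: le_trans (normD4 _ _ _ _) _; have := mulr_ge0 wb_ge0 supdist_ge0; lra.
Qed.

Lemma homotopy_continuous t {f} e : antipodal_lip1 f -> 0 < e ->
  exists2 del : R, 0 < del & forall s g, 0 <= s <= 1 -> antipodal_lip1 g ->
    `|s - t| < del -> supdist f g < del -> supdist (homotopy t f) (homotopy s g) < e.
Proof.
move=> f_lip e_gt0; have pi_gt0 := pi_gt0 R.
have c_gt0 : 0 < 4 * pi + 2 :> R by lra.
exists (e / (4 * pi + 2)) => [|s g s_bd g_lip st_lt fg_lt]; first exact: divr_gt0.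
have del_le : (4 * pi + 1) * (e / (4 * pi + 2)) < e.
  by rewrite mulrA ltr_pdivrMr //; lra.
apply: le_lt_trans del_le; apply: supdist_le; first exact: inhabits north.
move=> y; apply: le_trans (homotopy_dist_le t s y f_lip g_lip s_bd) _.
rewrite distrC in st_lt.
have : 4 * pi * `|t - s| <= 4 * pi * (e / (4 * pi + 2)) by rewrite ler_wpM2l ?ltW //; lra.
lra.
Qed.

End Contraction.

Theorem proposition3p24 (R : realType) (n : nat) :
  (0 < n)%N -> contractible (fun f g : sphere R n -> R => supdist f g) (thickening R n).
Proof.
case: n => [//|m] _.
exists (kur base).
  apply/thickeningP; split; first exact: antipodal_lip1_kur.
  by exists base; rewrite /kur dSxx divr_gt0 ?pi_gt0.
exists homotopy; split.
- move=> t f t_bd /thickeningP[f_lip f_lt]; apply/thickeningP.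
  by split; [exact: antipodal_lip1_homotopy | exact: homotopy_exists_lt_pihalf].
- by move=> f _; exact: homotopy0.
- by move=> f _; exact: homotopy1.
- move=> t f _ /thickeningP[f_lip _] e e_gt0.
  have [del del_gt0 del_ok] := homotopy_continuous t e f_lip e_gt0.
  by exists del => // s g s_bd /thickeningP[g_lip _]; exact: del_ok.
Qed.
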